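(* Let $n\ge1$ and let $\Delta\subseteq B_n$ be any simplicial complex (a family of subsets of $[1,n]$ closed under taking subsets). Then there is a subcomplex $\Delta'\subseteq\Delta$ such that $f_i(\Delta')=f_i(\Delta)-f_{n-i}(\Delta)$ for $0\le i\le\lfloor\frac n2\rfloor$ and $f_i(\Delta')=0$ for $i>\lfloor\frac n2\rfloor$.
   Context: $B_n$ is the Boolean lattice of subsets of $[1,n]=\{1,\dots,n\}$. For a family $\Delta$ of subsets, $f_i(\Delta)$ is the number of sets of cardinality $i$ in $\Delta$. A subcomplex of $\Delta$ is a subfamily that is itself closed under taking subsets (possibly empty). *)

From mathcomp Require Import all_boot all_order all_algebra.
Set Implicit Arguments. Unset Strict Implicit. Unset Printing Implicit Defensive.

(* The Boolean lattice B_n: subsets of [1,n], modelled as {set 'I_n}.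
   A family of subsets is a {set {set 'I_n}}. *)

Definition is_complex (n : nat) (D : {set {set 'I_n}}) : Prop :=
  forall A B : {set 'I_n}, A \in D -> B \subset A -> B \in D.

Definition fvec (n : nat) (D : {set {set 'I_n}}) (i : nat) : nat :=
  #|[set A in D | #|A| == i]|.

From mathcomp Require Import all_boot all_order all_algebra all_fingroup.
From mathcomp Require Import zify.

(* For a complex D and an upset E there is a subcomplex G of D with
   f_j(G) = f_j(D) - f_j(E) (truncated) for every j.  Applied to the upset of
   complements of faces of D, for which f_j(E) = f_(n-j)(D), this gives
   f_j(G) = f_j(D) - f_(n-j)(D).  Since G is a complex, f_(n-j)(G) > 0 would
   force f_j(G) > 0 for j <= n - j, which is impossible if
   f_j(D) < f_(n-j)(D); hence f_(n-j)(D) <= f_j(D) there, and the truncated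
   differences are the true ones below n/2 and vanish above. *)

Set Implicit Arguments.
Unset Strict Implicit.
Unset Printing Implicit Defensive.

Section FinsetPerm.
Variable T : finType.

Lemma perm_imset_eq (A B : {set T}) :
  #|A| = #|B| -> exists s : {perm T}, s @: A = B.
Proof.
have [k] := ubnP #|A :\: B|; elim: k A => // k IH A /ltnSE leABk eqAB.
have [sAB | /subsetPn [x xA xNB]] := boolP (A \subset B).
  by exists 1%g; rewrite imset_perm1; apply/eqP; rewrite eqEcard sAB eqAB leqnn.
have [y yB yNA] : exists2 y, y \in B & y \notin A.
  apply/subsetPn; apply: contra xNB => sBA.
  by have /eqP-> : B == A by rewrite eqEcard sBA eqAB leqnn.
have shrink : (tperm x y @: A) :\: B \subset (A :\: B) :\ x.
  apply/subsetP => _ /setDP [/imsetP [z zA ->] tzNB].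
  rewrite !inE; case: tpermP tzNB => [_|zy|/eqP zx _ zNB].
  - by rewrite yB.
  - by rewrite -zy zA in yNA.
  - by rewrite zx zNB zA.
have [||s <-] := IH (tperm x y @: A).
- rewrite (leq_ltn_trans (subset_leq_card shrink)) //.
  by rewrite (cardsD1 x) !inE xA xNB in leABk.
- by rewrite card_imset //; apply: perm_inj.
by exists (tperm x y * s)%g; rewrite -imset_comp; apply: eq_imset => z; rewrite permM.
Qed.

Lemma subset_of_card (B : {set T}) k :
  k <= #|B| -> exists2 C : {set T}, C \subset B & #|C| = k.
Proof.
rewrite -bin_gt0 -cards_draws card_gt0 => /set0Pn [C].
by rewrite inE => /andP [sCB /eqP cardC]; exists C.
Qed.

Definition is_upset (E : {set {set T}}) : Prop :=
  forall A B : {set T}, A \in E -> A \subset B -> B \in E.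

Definition perm_family (s : {perm T}) (E : {set {set T}}) : {set {set T}} :=
  [set s @: X | X : {set T} in E].

Lemma perm_family_upset s E : is_upset E -> is_upset (perm_family s E).
Proof.
move=> upE _ B /imsetP [X XE ->] sXB; apply/imsetP; exists (s^-1%g @: B).
  apply: upE XE _; apply/subsetP => z zX; apply/imsetP; exists (s z).
    by apply: (subsetP sXB); apply: imset_f.
  by rewrite permK.
by rewrite -imset_comp (eq_imset _ (permKV s)) imset_id.
Qed.

Lemma card_perm_family s E : #|perm_family s E| = #|E|.
Proof. by rewrite card_imset //; apply/imset_inj/perm_inj. Qed.

End FinsetPerm.

Section FVector.
Variable n : nat.
Implicit Types (D E G : {set {set 'I_n}}) (A B : {set 'I_n}).

Lemma fvec_gt0P E j : reflect (exists2 A, A \in E & #|A| = j) (0 < fvec E j).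
Proof.
rewrite /fvec card_gt0; apply: (iffP (set0Pn _)) => [[A]|[A AE cardA]].
  by rewrite inE => /andP [AE /eqP]; exists A.
by exists A; rewrite inE AE cardA eqxx.
Qed.

Lemma fvec_perm_family (s : {perm 'I_n}) E j : fvec (perm_family s E) j = fvec E j.
Proof.
have card_s A : #|s @: A| = #|A| by apply/card_imset/perm_inj.
rewrite /fvec -[RHS](card_perm_family s); apply: eq_card => A.
rewrite inE; apply/andP/imsetP => [[/imsetP [X XE ->]]|].
  by rewrite card_s => cardX; exists X; rewrite // inE XE.
by case=> X; rewrite inE => /andP [XE cardX] ->; rewrite card_s imset_f.
Qed.

Lemma fvec_setDI D E j : fvec D j = fvec (D :\: E) j + fvec (D :&: E) j.
Proof.
rewrite /fvec -(cardsID E) addnC; congr (_ + _); apply: eq_card => A;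
  by rewrite !inE; case: (A \in D); case: (A \in E); case: (#|A| == j).
Qed.

Lemma fvec_setD_sub D E j :
  fvec (D :\: E) j - fvec (E :\: D) j = fvec D j - fvec E j.
Proof. by rewrite (fvec_setDI D E) (fvec_setDI E D) setIC subnDr. Qed.

Lemma complex_setD_upset D E : is_complex D -> is_upset E -> is_complex (D :\: E).
Proof.
move=> cD uE A B /setDP [AD AnE] sBA; rewrite inE (cD A B) // andbT.
by apply: contra AnE => BE; apply: uE sBA.
Qed.

Lemma upset_setD_complex E D : is_upset E -> is_complex D -> is_upset (E :\: D).
Proof.
move=> uE cD A B /setDP [AE AnD] sAB; rewrite inE (uE A B) // andbT.
by apply: contra AnD => BD; apply: cD sAB.
Qed.

(* Strong induction on #|E|: a permutation moving some member of E onto a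
   member of D of the same size makes the families meet, and the common part
   can be discarded from both without changing the truncated differences. *)
Lemma complex_sub_upset D E :
  is_complex D -> is_upset E ->
  exists G, [/\ is_complex G, G \subset D & forall j, fvec G j = fvec D j - fvec E j].
Proof.
have [k] := ubnP #|E|; elim: k D E => // k IH D E /ltnSE leEk cD uE.
have [/existsP [A /existsP [B /and3P [AE BD /eqP cardAB]]] | noMatch] :=
  boolP [exists A, exists B, [&& A \in E, B \in D & #|A| == #|B|]].
  have [s sAB] := perm_imset_eq cardAB.
  set E' := perm_family s E.
  have BE' : B \in E' by rewrite -sAB; apply: imset_f.
  have ltE' : #|E' :\: D| < k.
    rewrite (leq_trans _ leEk) // -[#|E|](card_perm_family s) -/E'.
    by apply/proper_card/properP; split; [apply: subsetDl | exists B; rewrite ?inE ?BD].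
  have uE' : is_upset E' := perm_family_upset uE.
  have [G [cG sGD fG]] :=
    IH _ _ ltE' (complex_setD_upset cD uE') (upset_setD_complex uE' cD).
  exists G; split => // [|j].
    by rewrite (subset_trans sGD) ?subsetDl.
  by rewrite fG fvec_setD_sub fvec_perm_family.
exists D; split => // j.
case: (posnP (fvec E j)) => [-> | /fvec_gt0P [A AE cardA]]; first by rewrite subn0.
case: (posnP (fvec D j)) => [-> // | /fvec_gt0P [B BD cardB]].
case/negP: noMatch; apply/existsP; exists A; apply/existsP; exists B.
by rewrite AE BD cardA cardB eqxx.
Qed.

Lemma complex_fvec_gt0_le G j k :
  is_complex G -> j <= k -> 0 < fvec G k -> 0 < fvec G j.
Proof.
move=> cG le_jk /fvec_gt0P [B BG cardB].
have [C sCB cardC] := subset_of_card (leq_trans le_jk (eq_leq (esym cardB))).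
by apply/fvec_gt0P; exists C => //; apply: cG sCB.
Qed.

Lemma fvec_eq0 D i : n < i -> fvec D i = 0.
Proof.
move=> lt_ni; apply/eqP; rewrite eqn0Ngt; apply/fvec_gt0P => -[A _ cardA].
by move: (max_card A); rewrite cardA card_ord leqNgt lt_ni.
Qed.

Lemma upset_compl D : is_complex D -> is_upset [set X | ~: X \in D].
Proof. by move=> cD A B; rewrite !inE => AD sAB; apply: cD AD _; rewrite setCS. Qed.

Lemma fvec_compl D j : j <= n -> fvec [set X | ~: X \in D] j = fvec D (n - j).
Proof.
move=> le_jn; rewrite /fvec -[RHS](card_imset _ (@setC_inj _)).
apply: eq_card => A; rewrite -[in RHS](setCK A) mem_imset; last exact: setC_inj.
rewrite !inE [#|A|]cardsCs card_ord; congr (_ && _).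
by apply/eqP/eqP => [<-|->]; rewrite subKn // -[X in _ <= X]card_ord max_card.
Qed.

Lemma complex_fvec_dual_le D j :
  is_complex D -> j <= n - j -> fvec D (n - j) <= fvec D j.
Proof.
move=> cD le_j_nj; have le_jn : j <= n by apply: leq_trans le_j_nj (leq_subr _ _).
have [G [cG _ fG]] := complex_sub_upset cD (upset_compl cD).
rewrite leqNgt; apply/negP => lt_fvec.
have : 0 < fvec G j.
  apply: complex_fvec_gt0_le cG le_j_nj _.
  by rewrite fG fvec_compl ?leq_subr // subKn // subn_gt0.
by rewrite fG fvec_compl // subn_gt0 ltnNge (ltnW lt_fvec).
Qed.

End FVector.

Theorem theorem11 (n : nat) (D : {set {set 'I_n}}) :
  (1 <= n)%N -> is_complex D ->
  exists D' : {set {set 'I_n}},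
    [/\ is_complex D', D' \subset D,
        (forall i : nat, (i <= n./2)%N ->
           ((fvec D' i)%:Z = (fvec D i)%:Z - (fvec D (n - i))%:Z)%R)
      & (forall i : nat, (n./2 < i)%N -> fvec D' i = 0%N)].
Proof.
move=> _ cD.
have [G [cG sGD fG]] := complex_sub_upset cD (upset_compl cD).
have half_n : n = n./2 + n./2 + odd n by rewrite addnn addnC odd_double_half.
exists G; split => // i le_i.
  rewrite fG fvec_compl; last by lia.
  by rewrite subzn // complex_fvec_dual_le //; lia.
have [le_in | lt_ni] := leqP i n; last exact: fvec_eq0.
rewrite fG fvec_compl //; apply/eqP; rewrite subn_eq0.
by rewrite -{1}(subKn le_in) complex_fvec_dual_le //; lia.
Qed.
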